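(* Let $b\ge2$ be an integer. Then for every positive integer $n$, \[2\sum_{m=1}^nH(n,m)b^m<\sum_{m=1}^{n+1}H(n+1,m)b^m.\]
   Context: A composition of a positive integer $n$ is an ordered tuple $(c_1,\ldots,c_m)$ of positive integers summing to $n$ ($m$ parts); it is headstrong if $c_1\ge c_i$ for all $i$. $H(n,m)$ is the number of headstrong compositions of $n$ with exactly $m$ parts. *)

From mathcomp Require Import all_boot.
Set Implicit Arguments. Unset Strict Implicit. Unset Printing Implicit Defensive.

Definition composition (n m : nat) (c : seq nat) : bool :=
  [&& size c == m, all (fun x => 0 < x) c & sumn c == n].

Definition headstrong (c : seq nat) : bool :=
  all (fun x => x <= head 0 c) c.

(* H(n,m): number of headstrong compositions of n with exactly m parts.
   Every part lies in [1, n], so it suffices to range over m-tuples of 'I_n.+1. *)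
Definition H (n m : nat) : nat :=
  #|[set t : m.-tuple 'I_n.+1 |
      composition n m (map (@nat_of_ord _) t) && headstrong (map (@nat_of_ord _) t)]|.

From mathcomp Require Import all_boot.

(* Appending a part 1 maps headstrong compositions of n with m >= 1 parts
   injectively to headstrong compositions of n + 1 with m + 1 parts, so
   H(n, m) <= H(n + 1, m + 1).  Hence, as b >= 2, twice the left-hand sum is
   at most the part of the right-hand sum with m >= 2, and the term
   H(n + 1, 1) b >= b > 0 makes the inequality strict. *)

Lemma composition_rcons1 (n m : nat) (c : seq nat) :
  composition n m c -> composition n.+1 m.+1 (rcons c 1).
Proof.
case/and3P=> /eqP size_c pos_c /eqP sum_c.
by rewrite /composition size_rcons all_rcons sumn_rcons size_c pos_c sum_c addn1 !eqxx.
Qed.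

Lemma headstrong_rcons1 (c : seq nat) :
  0 < head 0 c -> headstrong c -> headstrong (rcons c 1).
Proof. by case: c => [|x c] // x_gt0; rewrite /headstrong rcons_cons /= all_rcons /= x_gt0. Qed.

Lemma head_composition_gt0 (n m : nat) (c : seq nat) :
  0 < m -> composition n m c -> 0 < head 0 c.
Proof.
case: c => [|x c] m_gt0 /and3P [/eqP size_c pos_c _]; first by rewrite -size_c in m_gt0.
by case/andP: pos_c.
Qed.

Lemma H_leq_succ (n m : nat) : 0 < m -> H n m <= H n.+1 m.+1.
Proof.
move=> m_gt0; rewrite /H.
pose f (t : m.-tuple 'I_n.+1) : m.+1.-tuple 'I_n.+2 :=
  rcons_tuple (map_tuple (widen_ord (leqnSn n.+1)) t) (inord 1).
have fE t : map (@nat_of_ord _) (f t) = rcons (map (@nat_of_ord _) t) 1.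
  by rewrite /= map_rcons -map_comp inordK.
have f_inj : injective f.
  move=> t1 t2 /(congr1 (fun t : m.+1.-tuple _ => map (@nat_of_ord _) t)).
  rewrite !fE => /eqP; rewrite eqseq_rcons andbT => /eqP /(inj_map (@ord_inj _)).
  exact: val_inj.
rewrite -(card_imset _ f_inj); apply: subset_leq_card.
apply/subsetP=> _ /imsetP [t + ->]; rewrite !inE fE => /andP [comp_t hs_t].
rewrite composition_rcons1 //= headstrong_rcons1 //.
exact: head_composition_gt0 m_gt0 comp_t.
Qed.

Lemma H_succ_1_gt0 (n : nat) : 0 < H n.+1 1.
Proof.
rewrite /H card_gt0; apply/set0Pn; exists [tuple (@ord_max n.+1)].
by rewrite inE /composition /headstrong /= leqnn addn0 eqxx.
Qed.

Lemma scaled_sum_H_leq (b n : nat) :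
  b * (\sum_(1 <= m < n.+1) H n m * b ^ m) <= \sum_(1 <= m < n.+1) H n.+1 m.+1 * b ^ m.+1.
Proof.
rewrite big_distrr !big_nat; apply: leq_sum => m /andP [m_gt0 _].
by rewrite expnS mulnCA leq_mul // leq_mul // H_leq_succ.
Qed.

Theorem mainTheorem17 (b : nat) (hb : 2 <= b) (n : nat) (hn : 0 < n) :
  2 * (\sum_(1 <= m < n.+1) H n m * b ^ m) < \sum_(1 <= m < n.+2) H n.+1 m * b ^ m.
Proof.
rewrite [X in _ < X]big_ltn // [X in _ < _ + X]big_add1 /= expn1 addnC.
have first_term_gt0 : 0 < H n.+1 1 * b by rewrite muln_gt0 H_succ_1_gt0 (leq_trans _ hb).
apply: leq_trans (leq_add (scaled_sum_H_leq b n) first_term_gt0).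
by rewrite addn1 ltnS leq_mul2r hb orbT.
Qed.
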